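(* Let $v_1,\dots,v_m$ be distinct values and $X_1,\dots,X_n$ finite domain variables. Introduce variables $Y_1,\dots,Y_{n+1}$ with domains in $\{0,\dots,m\}$, $Y_1=0$, and for each $1\le i\le n$ the ternary constraint $D(X_i,Y_i,Y_{i+1})$ which holds iff $X_i\neq v_j$ for every $j>Y_i+1$, and $Y_{i+1}=Y_i+1$ if $X_i=v_{Y_i+1}$, and $Y_{i+1}=Y_i$ otherwise. Then (a) an assignment to $X_1,\dots,X_n$ satisfies $\mathrm{Precedence}([v_1,\dots,v_m],[X_1,\dots,X_n])$ iff it extends to an assignment of $Y_1,\dots,Y_{n+1}$ with $Y_1=0$ satisfying all $D(X_i,Y_i,Y_{i+1})$; and (b) if $D(Y_1)=\{0\}$ and every constraint $D(X_i,Y_i,Y_{i+1})$, $1\le i\le n$, is GAC (with all domains nonempty), then $\mathrm{Precedence}([v_1,\dots,v_m],[X_1,\dots,X_n])$ is GAC on the domains of $X_1,\dots,X_n$.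
   Context: A support of a constraint is an assignment of a value from its domain to each of its variables that satisfies it; a constraint is GAC iff every value in every variable's domain belongs to some support. For distinct values $a,b$, $\mathrm{Precedence}([a,b],[X_1,\dots,X_n])$ holds iff $\min\{i \mid X_i=a \text{ or } i=n+1\} < \min\{i \mid X_i=b \text{ or } i=n+2\}$; $\mathrm{Precedence}([v_1,\dots,v_m],[X_1,\dots,X_n])$ holds iff $\mathrm{Precedence}([v_i,v_{i+1}],[X_1,\dots,X_n])$ holds for all $1\le i<m$. *)

From mathcomp Require Import all_boot.
Set Implicit Arguments. Unset Strict Implicit. Unset Printing Implicit Defensive.

(* Conventions: variables X_1..X_n are represented 0-based as X 0 .. X (n-1);
   Y_1..Y_{n+1} as Y 0 .. Y n.  The values v_1..v_m are the list v (0-based),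
   m = size v.  Finite domains are lists. *)

(* Precedence([a,b],[X_1..X_n]):
   min{i | X_i = a or i = n+1} < min{i | X_i = b or i = n+2}  (1-based). *)
Definition first_or {T : eqType} (n : nat) (X : nat -> T) (a : T) (dflt : nat) : nat :=
  let s := mkseq X n in if a \in s then (index a s).+1 else dflt.

Definition precedence2 {T : eqType} (a b : T) (n : nat) (X : nat -> T) : bool :=
  first_or n X a n.+1 < first_or n X b n.+2.

Definition precedence {T : eqType} (v : seq T) (n : nat) (X : nat -> T) : bool :=
  all (fun p => precedence2 p.1 p.2 n X) (zip v (behead v)).

(* D(x, y, y'): x <> v_j for all j > y+1 (1-based, j <= m), and
   y' = y+1 if x = v_{y+1}, y' = y otherwise (v_{y+1} exists iff y < m). *)
Definition Dcons {T : eqType} (v : seq T) (x : T) (y y' : nat) : bool :=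
  [&& (x \notin drop y.+1 v) &
      (if (y < size v) && (x == nth x v y) then y' == y.+1 else y' == y)].

Definition precedence_GAC {T : eqType} (v : seq T) (n : nat) (DX : nat -> seq T) : Prop :=
  forall i, i < n -> forall a, a \in DX i ->
    exists X : nat -> T,
      (forall j, j < n -> X j \in DX j) /\ X i = a /\ precedence v n X.

Definition Dcons_GAC {T : eqType} (v : seq T) (dx : seq T) (dy dy' : seq nat) : Prop :=
  (forall x, x \in dx -> exists y y', [/\ y \in dy, y' \in dy' & Dcons v x y y']) /\
  (forall y, y \in dy -> exists x y', [/\ x \in dx, y' \in dy' & Dcons v x y y']) /\
  (forall y', y' \in dy' -> exists x y, [/\ x \in dx, y \in dy & Dcons v x y y']).

From mathcomp Require Import all_boot.
Set Implicit Arguments.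
Unset Strict Implicit.
Unset Printing Implicit Defensive.

(* (a) Precedence holds iff every occurrence of v_(k+1) in X is preceded by an
   occurrence of v_k ([precedenceP]).  Reading X from left to right, the state
   Y = "v_0, ..., v_(Y-1) have been seen" evolves by [step].  As long as the
   precedence condition holds on the prefix, the values of v seen so far are
   exactly v_0..v_(Y-1) ([state_seen]), so the condition at position i becomes
   "X_i is none of v_(Y+1), ..., v_(m-1)", the first conjunct of D
   ([preceded_iff_Dcons]).  As D forces Y_(i+1) = step Y_i X_i, any Y
   satisfying the chain is the state sequence; this gives [decomposition].

   (b) Supports are assembled from pieces: a [chain] on lo..hi assigns
   X_lo..X_(hi-1) and Y_lo..Y_hi inside their domains so that the constraints
   in between hold.  Chains agreeing on Y_mid glue ([chain_glue]), and GAC of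
   the constraints extends any value of Y_k to a chain back to position 0
   ([chain_to]) and forward to position n ([chain_from]).  For a value a of
   X_i, a support of the i-th constraint flanked by two such chains is a full
   chain, hence by (a) a support of Precedence with X_i = a ([chain_support]). *)

Section Precedence.
Variable T : eqType.

Variant first_or_spec (n : nat) (X : nat -> T) (a : T) (dflt : nat) : nat -> Prop :=
  | FirstOcc k of k < n & X k = a & (forall j, j < n -> X j = a -> k <= j) :
      first_or_spec n X a dflt k.+1
  | NoOcc of (forall j, j < n -> X j != a) : first_or_spec n X a dflt dflt.

Lemma first_orP (n : nat) (X : nat -> T) (a : T) (dflt : nat) :
  first_or_spec n X a dflt (first_or n X a dflt).
Proof.
rewrite /first_or; set s := mkseq X n.
have size_s : size s = n by rewrite size_mkseq.
have nth_s j : j < n -> nth a s j = X j by move=> jn; rewrite nth_mkseq.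
case: ifPn => [a_in | a_notin].
- have kn : index a s < n by rewrite -size_s index_mem.
  apply: FirstOcc => // [|j jn Xj]; first by rewrite -nth_s // nth_index.
  by rewrite -Xj -nth_s // index_nth // size_s.
- apply: NoOcc => j jn; apply: contraNneq a_notin => <-.
  by rewrite -nth_s // mem_nth // size_s.
Qed.

Lemma precedence2P (a b : T) (n : nat) (X : nat -> T) :
  precedence2 a b n X <-> (forall i, i < n -> X i = b -> exists2 j, j < i & X j = a).
Proof.
rewrite /precedence2.
case: first_orP => [ka ka_n Xka ka_min | no_a];
  case: first_orP => [kb kb_n Xkb kb_min | no_b].
- rewrite ltnS; split=> [lt_ab i i_n Xi | Hb].
  + by exists ka => //; exact: leq_trans lt_ab (kb_min i i_n Xi).
  + have [j j_kb Xj] := Hb kb kb_n Xkb.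
    exact: leq_ltn_trans (ka_min j (ltn_trans j_kb kb_n) Xj) j_kb.
- have -> : ka.+1 < n.+2 by rewrite !ltnS ltnW.
  by split=> // _ i i_n /eqP; rewrite (negPf (no_b i i_n)).
- split=> [|Hb]; first by rewrite ltnS ltnNge (ltnW kb_n).
  have [j j_kb /eqP] := Hb kb kb_n Xkb.
  by rewrite (negPf (no_a j (ltn_trans j_kb kb_n))).
- by rewrite ltnSn; split=> // _ i i_n /eqP; rewrite (negPf (no_b i i_n)).
Qed.

(* Default value for [nth]; it is irrelevant as all indices are in range. *)
Variable d : T.

Definition preceded (v : seq T) (X : nat -> T) (i : nat) : Prop :=
  forall k, k.+1 < size v -> X i = nth d v k.+1 ->
    exists2 j, j < i & X j = nth d v k.

Lemma precedenceP (v : seq T) (n : nat) (X : nat -> T) :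
  precedence v n X <-> (forall i, i < n -> preceded v X i).
Proof.
rewrite /preceded; elim: v => [|a [|b r] IH] //=.
have -> : precedence [:: a, b & r] n X = precedence2 a b n X && precedence (b :: r) n X by [].
split=> [/andP [Hab Hr] i i_n [|k] /= k_lt Xi | H].
- exact: (proj1 (precedence2P a b n X) Hab i i_n Xi).
- exact: (proj1 IH Hr i i_n k k_lt Xi).
- apply/andP; split; first by apply/precedence2P => i i_n; apply: (H i i_n 0).
  by apply/IH => i i_n k k_lt; apply: (H i i_n k.+1).
Qed.

Lemma mem_dropP (v : seq T) (x : T) (y : nat) :
  x \in drop y v <-> exists2 k, y <= k < size v & x = nth d v k.
Proof.
split=> [/(nthP d) [i] | [k /andP [yk k_lt] ->]].
- rewrite size_drop nth_drop => i_lt <-; exists (y + i) => //.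
  by rewrite leq_addr -ltn_subRL.
- apply/(nthP d); exists (k - y); last by rewrite nth_drop subnKC.
  by rewrite size_drop ltn_sub2r // (leq_ltn_trans yk).
Qed.

End Precedence.

Section Decomposition.
Variables (T : eqType) (d : T) (v : seq T) (X : nat -> T).
Hypothesis uniq_v : uniq v.

Definition step (y : nat) (x : T) : nat :=
  if (y < size v) && (x == nth d v y) then y.+1 else y.

Lemma DconsE (x : T) (y y' : nat) :
  Dcons v x y y' = (x \notin drop y.+1 v) && (y' == step y x).
Proof.
rewrite /Dcons /step; case y_lt: (y < size v) => //=.
by rewrite (set_nth_default d x y_lt); case: (x == nth d v y).
Qed.

Fixpoint state (i : nat) : nat := if i is i'.+1 then step (state i') (X i') else 0.

Definition seen (k i : nat) : Prop := exists2 j, j < i & X j = nth d v k.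

Lemma preceded_drop (i Y : nat) : Y <= size v ->
  (forall k, k < size v -> seen k i <-> k < Y) ->
  preceded d v X i <-> X i \notin drop Y.+1 v.
Proof.
move=> Y_le seenE; split=> [Hi | Hnot k k_lt Xi].
- apply/negP => /(mem_dropP d) [[|k] // /andP [Yk k_lt] Xi].
  have /(seenE k (ltnW k_lt)) := Hi k k_lt Xi.
  by rewrite ltnNge -ltnS Yk.
- apply/(seenE k (ltnW k_lt)); rewrite ltnNge; apply: contra Hnot => Yk.
  by apply/(mem_dropP d); exists k.+1; rewrite ?ltnS ?Yk.
Qed.

Lemma state_seen (i : nat) : (forall j, j < i -> preceded d v X j) ->
  state i <= size v /\ (forall k, k < size v -> seen k i <-> k < state i).
Proof.
elim: i => [_ | i IH Hprec]; first by split=> // k _; split=> // [[]].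
have [Y_le seenE] := IH (fun j ji => Hprec j (ltnW ji)).
have X_notin := proj1 (preceded_drop Y_le seenE) (Hprec i (ltnSn i)).
have seen_lift k : seen k i -> seen k i.+1.
  by case=> j ji Xj; exists j => //; apply: ltnW.
have seen_last k : seen k i.+1 -> seen k i \/ X i = nth d v k.
  by case=> j; rewrite ltnS leq_eqVlt => /orP [/eqP -> | ji] Xj; [right | left; exists j].
rewrite /= /step; case: ifPn => [/andP [Y_lt /eqP Xi] | Hstep].
- split=> // k k_lt; split=> [/seen_last [/(seenE k k_lt) /ltnW // | Xik] | ].
  + move: Xik; rewrite Xi => /eqP; rewrite nth_uniq // => /eqP ->; exact: ltnSn.
  + rewrite ltnS leq_eqVlt => /orP [/eqP -> | kY]; first by exists i.
    by apply/seen_lift/(seenE k k_lt).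
- split=> // k k_lt; split=> [/seen_last [/(seenE k k_lt) // | Xik] | ].
  + case: (ltngtP k (state i)) => // [Yk | kY].
    * by case/negP: X_notin; apply/(mem_dropP d); exists k; rewrite ?Yk.
    * by move: Hstep; rewrite -kY k_lt Xik eqxx.
  + by move/(seenE k k_lt); apply: seen_lift.
Qed.

Lemma preceded_iff_Dcons (i : nat) : (forall j, j < i -> preceded d v X j) ->
  preceded d v X i <-> Dcons v (X i) (state i) (state i.+1).
Proof.
move=> Hprec; have [Y_le seenE] := state_seen Hprec.
by rewrite DconsE eqxx andbT; exact: preceded_drop.
Qed.

Lemma decomposition (n : nat) :
  precedence v n X <->
  exists Y : nat -> nat,
    [/\ Y 0 = 0, (forall i, i <= n -> Y i <= size v) &
        (forall i, i < n -> Dcons v (X i) (Y i) (Y i.+1))].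
Proof.
apply: iff_trans (precedenceP d v n X) _; split=> [Hprec | [Y [Y0 _ HD]]].
- have prefix i : i <= n -> forall j, j < i -> preceded d v X j.
    by move=> i_n j ji; apply: Hprec (leq_trans ji i_n).
  exists state; split=> // i i_n; first exact: (state_seen (prefix i i_n)).1.
  by apply/preceded_iff_Dcons; [exact: prefix (ltnW i_n) | exact: Hprec].
- have YE i : i <= n -> Y i = state i.
    elim: i => [// | i IH] i_n; move: (HD i i_n); rewrite DconsE => /andP [_ /eqP ->].
    by rewrite IH // ltnW.
  suff prefix i : i <= n -> forall j, j < i -> preceded d v X j.
    by move=> i i_n; apply: prefix i_n i (ltnSn i).
  elim: i => [// | i IH] i_n j; rewrite ltnS leq_eqVlt => /orP [/eqP -> | ji].
  + have Hpre := IH (ltnW i_n); apply/(preceded_iff_Dcons Hpre).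
    by move: (HD i i_n); rewrite !YE // ltnW.
  + exact: IH (ltnW i_n) j ji.
Qed.

End Decomposition.

Section Supports.
Variables (T : eqType) (v : seq T) (n : nat).
Variables (DX : nat -> seq T) (DY : nat -> seq nat).
Hypothesis GAC_D : forall i, i < n -> Dcons_GAC v (DX i) (DY i) (DY i.+1).

Definition chain (X : nat -> T) (Y : nat -> nat) (lo hi : nat) : Prop :=
  (forall j, lo <= j < hi -> X j \in DX j /\ Dcons v (X j) (Y j) (Y j.+1)) /\
  (forall j, lo <= j <= hi -> Y j \in DY j).

Definition glueX (mid : nat) (X1 X2 : nat -> T) (j : nat) : T :=
  if j < mid then X1 j else X2 j.

Definition glueY (mid : nat) (Y1 Y2 : nat -> nat) (j : nat) : nat :=
  if j <= mid then Y1 j else Y2 j.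

Lemma chain_glue (X1 X2 : nat -> T) (Y1 Y2 : nat -> nat) (lo mid hi : nat) :
  Y1 mid = Y2 mid -> chain X1 Y1 lo mid -> chain X2 Y2 mid hi ->
  chain (glueX mid X1 X2) (glueY mid Y1 Y2) lo hi.
Proof.
move=> Ymid [HX1 HY1] [HX2 HY2]; rewrite /glueX /glueY; split=> j /andP [lo_j j_hi].
- case: ltnP => [j_mid | mid_j]; first by rewrite (ltnW j_mid); apply: HX1; rewrite lo_j.
  case: leqP => [j_le | _]; last by apply: HX2; rewrite mid_j.
  have j_eq : j = mid by apply/eqP; rewrite eqn_leq j_le.
  by rewrite j_eq Ymid; apply: HX2; rewrite leqnn -j_eq.
- case: leqP => [j_mid | mid_j]; first by apply: HY1; rewrite lo_j.
  by apply: HY2; rewrite ltnW.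
Qed.

Lemma chain_step (j : nat) (x : T) (y y' : nat) :
  x \in DX j -> y \in DY j -> y' \in DY j.+1 -> Dcons v x y y' ->
  chain (fun _ => x) (glueY j (fun _ => y) (fun _ => y')) j j.+1.
Proof.
move=> Hx Hy Hy' HD; rewrite /glueY; split=> [k /andP [jk kj] | k /andP [jk kj]].
- have -> : k = j by apply/eqP; rewrite eqn_leq jk -ltnS kj.
  by rewrite leqnn ltnn.
- case: leqP => [k_j | j_k].
  + by have -> : k = j by apply/eqP; rewrite eqn_leq k_j.
  + by have -> : k = j.+1 by apply/eqP; rewrite eqn_leq kj.
Qed.

Lemma chain_nil (x : T) (k y : nat) : y \in DY k -> chain (fun _ => x) (fun _ => y) k k.
Proof.
move=> Hy; split=> [j /andP [kj jk] | j]; first by rewrite ltnNge kj in jk.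
by rewrite -eqn_leq => /eqP <-.
Qed.

Variable x0 : T.

Lemma chain_to (k : nat) : k <= n -> forall y, y \in DY k ->
  exists X Y, Y k = y /\ chain X Y 0 k.
Proof.
elim: k => [_ y Hy | k IH k_n y Hy].
  by exists (fun _ => x0), (fun _ => y); split; last exact: chain_nil.
have [x [y0 [Hx Hy0 HD]]] := (GAC_D k_n).2.2 y Hy.
have [X [Y [Yk HXY]]] := IH (ltnW k_n) y0 Hy0.
exists (glueX k X (fun _ => x)), (glueY k Y (glueY k (fun _ => y0) (fun _ => y))).
split; first by rewrite /glueY ltnn.
apply: chain_glue HXY (chain_step Hx Hy0 Hy HD).
by rewrite /glueY leqnn Yk.
Qed.

(* Every value of Y_s extends to a chain from position s to n; the induction
   is on the length r = n - s. *)
Lemma chain_from (r s : nat) : s + r = n -> forall y, y \in DY s ->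
  exists X Y, Y s = y /\ chain X Y s n.
Proof.
elim: r s => [|r IH] s s_n y Hy.
  by rewrite -s_n addn0; exists (fun _ => x0), (fun _ => y); split; last exact: chain_nil.
have s_lt : s < n by rewrite -s_n addnS ltnS leq_addr.
have [x [y' [Hx Hy' HD]]] := (GAC_D s_lt).2.1 y Hy.
have [X [Y [Ys HXY]]] := IH s.+1 (etrans (addSnnS s r) s_n) y' Hy'.
exists (glueX s.+1 (fun _ => x) X), (glueY s.+1 (glueY s (fun _ => y) (fun _ => y')) Y).
split; first by rewrite /glueY leqnSn leqnn.
apply: chain_glue (chain_step Hx Hy Hy' HD) HXY.
by rewrite /glueY ltnn Ys.
Qed.

Hypothesis uniq_v : uniq v.
Hypothesis DY0 : forall y, (y \in DY 0) = (y == 0).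
Hypothesis DY_le : forall i, i <= n -> forall y, y \in DY i -> y <= size v.

Lemma chain_support (X : nat -> T) (Y : nat -> nat) : chain X Y 0 n ->
  (forall j, j < n -> X j \in DX j) /\ precedence v n X.
Proof.
move=> [HX HY]; split=> [j j_n | ]; first exact: (HX j j_n).1.
apply/(decomposition x0 X uniq_v); exists Y; split=> [| j j_n | j j_n].
- by apply/eqP; rewrite -DY0; apply: HY.
- by apply: (DY_le j_n); apply: HY; rewrite leq0n j_n.
- exact: (HX j j_n).2.
Qed.

End Supports.

Theorem mainTheorem8 (T : eqType) (v : seq T) (n : nat) :
  uniq v ->
  (* (a) decomposition is correct *)
  (forall X : nat -> T,
      precedence v n X <->
      exists Y : nat -> nat,
        [/\ Y 0 = 0,
            (forall i, i <= n -> Y i <= size v) &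
            (forall i, i < n -> Dcons v (X i) (Y i) (Y i.+1))]) /\
  (* (b) GAC on the decomposition implies GAC on Precedence *)
  (forall (DX : nat -> seq T) (DY : nat -> seq nat),
      (forall y, (y \in DY 0) = (y == 0)) ->
      (forall i, i <= n -> forall y, y \in DY i -> y <= size v) ->
      (forall i, i < n -> DX i != [::]) ->
      (forall i, i <= n -> DY i != [::]) ->
      (forall i, i < n -> Dcons_GAC v (DX i) (DY i) (DY i.+1)) ->
      precedence_GAC v n DX).
Proof.
move=> uniq_v; split=> [X | DX DY DY0 DY_le _ _ GAC_D i i_n a Ha].
  exact (decomposition (X 0) X uniq_v n).
(* A support of the i-th constraint with X_i = a, extended both ways. *)
have [y [y' [Hy Hy' HD]]] := (GAC_D i i_n).1 a Ha.
have [Xb [Yb [Ybi Hb]]] := chain_to GAC_D a (ltnW i_n) Hy.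
have [Xf [Yf [Yfi Hf]]] := chain_from GAC_D a (subnKC i_n) Hy'.
have := chain_glue _ Hb (chain_step Ha Hy Hy' HD).
rewrite {1}/glueY leqnn Ybi => /(_ erefl) Hleft.
have := chain_glue _ Hleft Hf; rewrite /glueY ltnn Yfi => /(_ erefl) Hall.
have [HX Hprec] := chain_support a uniq_v DY0 DY_le Hall.
exists (glueX i.+1 (glueX i Xb (fun _ => a)) Xf); split=> //; split=> //.
by rewrite /glueX ltnSn ltnn.
Qed.
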